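(* Let $T=T_{\lambda\Delta}$ be a non-degenerate T-graph. Embed $\mathcal H$ in the plane as follows: each white vertex $w$ is placed at the centre of mass of the triangle $\psi(w)$; each black vertex $b$ is placed at the unique vertex of $T$ lying in the interior of the segment $\psi(b)$; a white vertex $w$ and a black vertex $b$ are joined by a straight edge if and only if the segment $\psi(b)$ shares more than one point with the triangle $\psi(w)$. Then this is a proper embedding of $\mathcal H$ (the edges so drawn are exactly the edges of $\mathcal H$ and no two of them cross).
   Context: Setup. $\mathcal H$ is the hexagonal lattice with black/white bipartition, $\mathcal H^\dagger$ its dual triangular lattice, whose faces are coloured black or white according to the vertex of $\mathcal H$ they contain. A T-graph $T=T_{\lambda\Delta}=\psi(\mathcal H^\dagger)\subset\mathbb C$ is the image of $\mathcal H^\dagger$ under a map $\psi=\psi_{\lambda\Delta}$ defined on vertices of $\mathcal H^\dagger$ as the primitive of an explicit gradient flow (depending on a triangle $\Delta$ with angles $\pi p_a,\pi p_b,\pi p_c$, $p_a+p_b+p_c=1$, $p_\bullet\in(0,1)$, and a unit complex number $\lambda$) and extended affinely on edges. The following properties hold: the image of each black face of $\mathcal H^\dagger$ is a segment; the image of each white face is a triangle similar to $\Delta$ with orientation preserved; these triangles cover the plane with disjoint interiors; if two segments intersect, the intersection point is an endpoint of at least one of them. $T$ is called non-degenerate if no white triangle is degenerate to a point and every point $\psi(v)$, $v$ a vertex of $\mathcal H^\dagger$, belongs to exactly three segments, being an endpoint of two of them and in the interior of the third (this holds for Lebesgue-a.e. $\lambda$). The points $\psi(v)$ are the vertices of $T$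 (all segment endpoints are of this form), edges of $T$ are the portions of segments between consecutive vertices, faces of $T$ are the white triangles. One writes $\psi(b)$ for the segment image of the black face containing the black vertex $b$ of $\mathcal H$, and $\psi(w)$ for the triangle image of the white face containing white $w$. Each segment $\psi(b)$ contains exactly one vertex of $T$ in its interior. *)

(* real plane geometry, points of C = R^2 as pairs. *)
From Stdlib Require Import Reals Lra ZArith List Permutation.
Open Scope R_scope.

Definition Point : Type := (R * R)%type.

Definition padd (p q : Point) : Point := (fst p + fst q, snd p + snd q).
Definition psub (p q : Point) : Point := (fst p - fst q, snd p - snd q).
Definition pscale (t : R) (p : Point) : Point := (t * fst p, t * snd p).
Definition cmul (a p : Point) : Point :=
  (fst a * fst p - snd a * snd p, fst a * snd p + snd a * fst p).
Definition dist2 (p q : Point) : R :=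
  (fst p - fst q) * (fst p - fst q) + (snd p - snd q) * (snd p - snd q).
(* twice the signed area of (p,q,r); > 0 iff counterclockwise *)
Definition orient (p q r : Point) : R :=
  (fst q - fst p) * (snd r - snd p) - (snd q - snd p) * (fst r - fst p).

Definition hull3 (p q r : Point) (z : Point) : Prop :=
  exists a b c : R, 0 <= a /\ 0 <= b /\ 0 <= c /\ a + b + c = 1 /\
    z = padd (pscale a p) (padd (pscale b q) (pscale c r)).

Definition cseg (p q : Point) (z : Point) : Prop :=
  exists t : R, 0 <= t <= 1 /\ z = padd p (pscale t (psub q p)).

Definition openseg (q r z : Point) : Prop :=
  q <> r /\ exists t : R, 0 < t < 1 /\ z = padd q (pscale t (psub r q)).

(* extreme point of a set (for a segment: an endpoint) *)
Definition extreme (S : Point -> Prop) (z : Point) : Prop :=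
  S z /\ ~ (exists q r, S q /\ S r /\ openseg q r z).

Definition interior (S : Point -> Prop) (z : Point) : Prop :=
  exists e : R, 0 < e /\ forall u, dist2 u z < e * e -> S u.

(* ---- Lattices ----
   Vertices of the triangular lattice H^dagger : Z*Z.
   White vertex w=(x,y) of H  <-> up-triangle   {(x,y),(x+1,y),(x,y+1)}.
   Black vertex b=(x,y) of H  <-> down-triangle {(x+1,y),(x,y+1),(x+1,y+1)}.
   Two vertices of H are adjacent iff their triangles share an edge. *)
Definition ZP : Type := (Z * Z)%type.

Definition wface (w : ZP) : ZP * ZP * ZP :=
  let (x, y) := w in ((x, y), ((x + 1)%Z, y), (x, (y + 1)%Z)).
Definition bface (b : ZP) : ZP * ZP * ZP :=
  let (x, y) := b in (((x + 1)%Z, y), (x, (y + 1)%Z), ((x + 1)%Z, (y + 1)%Z)).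

Definition adjH (w b : ZP) : Prop :=
  let (x, y) := w in
  b = (x, y) \/ b = (x, (y - 1)%Z) \/ b = ((x - 1)%Z, y).

Definition img3 (psi : ZP -> Point) (f : ZP * ZP * ZP) : Point * Point * Point :=
  match f with (u, v, t) => (psi u, psi v, psi t) end.

(* psi(w) and psi(b) as subsets of the plane (psi extended affinely) *)
Definition psiW (psi : ZP -> Point) (w : ZP) : Point -> Prop :=
  match img3 psi (wface w) with (p, q, r) => hull3 p q r end.
Definition psiB (psi : ZP -> Point) (b : ZP) : Point -> Prop :=
  match img3 psi (bface b) with (p, q, r) => hull3 p q r end.

Record is_Tgraph (d0 d1 d2 : Point) (psi : ZP -> Point) : Prop := {
  (* image of each black face is a segment: its three vertex images are collinear *)
  tg_black_segment : forall b,
    match img3 psi (bface b) with (p, q, r) => orient p q r = 0 end;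
  (* image of each white face is a triangle similar to Delta, orientation preserved *)
  tg_white_similar : forall w, exists a c : Point,
    match img3 psi (wface w) with (p, q, r) =>
      Permutation (p :: q :: r :: nil)
        (padd (cmul a d0) c :: padd (cmul a d1) c :: padd (cmul a d2) c :: nil) end;
  tg_cover : forall z, exists w, psiW psi w z;
  tg_disjoint : forall w w' z, w <> w' ->
    interior (psiW psi w) z -> interior (psiW psi w') z -> False;
  tg_seg_inter : forall b b' z, b <> b' -> psiB psi b z -> psiB psi b' z ->
    extreme (psiB psi b) z \/ extreme (psiB psi b') z;
  tg_one_inner : forall b, exists v,
    psiB psi b (psi v) /\ ~ extreme (psiB psi b) (psi v) /\
    forall v', psiB psi b (psi v') -> ~ extreme (psiB psi b) (psi v') ->
      psi v' = psi v
}.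

Record is_nondegenerate (psi : ZP -> Point) : Prop := {
  nd_white : forall w,
    match img3 psi (wface w) with (p, q, r) => ~ (p = q /\ q = r) end;
  nd_vertex : forall v, exists b1 b2 b3,
    b1 <> b2 /\ b1 <> b3 /\ b2 <> b3 /\
    (forall b, psiB psi b (psi v) <-> (b = b1 \/ b = b2 \/ b = b3)) /\
    extreme (psiB psi b1) (psi v) /\ extreme (psiB psi b2) (psi v) /\
    ~ extreme (psiB psi b3) (psi v)
}.

Definition centroid (t : Point * Point * Point) : Point :=
  match t with (p, q, r) =>
    ((fst p + fst q + fst r) / 3, (snd p + snd q + snd r) / 3) end.

Definition posW (psi : ZP -> Point) (w : ZP) : Point := centroid (img3 psi (wface w)).

Definition black_pos_ok (psi : ZP -> Point) (pb : ZP -> Point) : Prop :=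
  forall b, (exists v, pb b = psi v) /\ psiB psi b (pb b) /\
            ~ extreme (psiB psi b) (pb b).

Definition drawn_edge (psi : ZP -> Point) (w b : ZP) : Prop :=
  exists z1 z2, z1 <> z2 /\ psiW psi w z1 /\ psiB psi b z1 /\
                psiW psi w z2 /\ psiB psi b z2.

(* vertices of H: inl = white, inr = black *)
Definition posH (psi : ZP -> Point) (pb : ZP -> Point) (v : ZP + ZP) : Point :=
  match v with inl w => posW psi w | inr b => pb b end.

Definition proper_embedding (psi : ZP -> Point) (pb : ZP -> Point) : Prop :=
  (forall v v' : ZP + ZP, posH psi pb v = posH psi pb v' -> v = v') /\
  (forall w b w' b' z, adjH w b -> adjH w' b' -> (w, b) <> (w', b') ->
     cseg (posW psi w) (pb b) z -> cseg (posW psi w') (pb b') z ->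
     (w = w' /\ z = posW psi w) \/ (b = b' /\ z = pb b)).

(* A nondegenerate triangle is described by the signs of the three signed areas [orient]:
   its closed hull and its topological interior are where these signs are weakly resp.
   strictly those of the triangle.  The three T-vertices of a black face lie on a line, the
   middle one being the black position, and each of its three sub-edges is an edge of one of
   the three adjacent white triangles; so an adjacent pair shares a side.  Conversely, if a
   white triangle meets a black segment in two points, pick an inner point of that piece other
   than the middle vertex: near it the plane is covered by the two white triangles glued to the
   segment there, one on each side, so the interior of the given triangle meets one of them and
   disjointness of interiors identifies it.
   For the embedding, the edge from the centroid of [psi w] to a black position lies, apart from
   its black end, in the open triangle [psi w].  Open white triangles are disjoint and contain no
   vertex of T, and distinct black faces have distinct black positions since every vertex of T
   is interior to exactly one segment.  Hence edges at different white vertices can only meet at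
   a common black end, and edges at the same white vertex only at the centroid. *)

From Pilot Require Import Defs.
From Stdlib Require Import Reals ZArith List.
Open Scope R_scope.
From Stdlib Require Import Lra Lia Permutation.
Import ListNotations.
(* [Reals] exports its own [interior]; restore the one of [Defs]. *)
Import Defs.

Ltac unfold_points := repeat match goal with p : Point |- _ => destruct p end;
  unfold orient, padd, pscale, psub, dist2 in *; simpl in *.

Lemma orient_cycle (p q r : Point) : orient p q r = orient q r p.
Proof. unfold_points; ring. Qed.

Lemma orient_swap12 (p q r : Point) : orient q p r = - orient p q r.
Proof. unfold_points; ring. Qed.

Lemma orient_swap23 (p q r : Point) : orient p r q = - orient p q r.
Proof. unfold_points; ring. Qed.

Lemma orient_degenerate (p r : Point) : orient p p r = 0.
Proof. unfold_points; ring. Qed.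

Lemma sqr_pos (x : R) : x <> 0 -> 0 < x * x.
Proof. intro; destruct (Rtotal_order x 0) as [h|[h|h]]; [nra|contradiction|nra]. Qed.

Lemma dist2_ge0 (a b : Point) : 0 <= dist2 a b.
Proof.
  unfold dist2. pose proof (Rle_0_sqr (fst a - fst b)). pose proof (Rle_0_sqr (snd a - snd b)).
  unfold Rsqr in *. lra.
Qed.

Definition lerp (x y : Point) (s : R) : Point := padd x (pscale s (psub y x)).

Lemma orient_lerp1 x y s q r : orient (lerp x y s) q r = (1 - s) * orient x q r + s * orient y q r.
Proof. unfold lerp; unfold_points; ring. Qed.
Lemma orient_lerp2 x y s p r : orient p (lerp x y s) r = (1 - s) * orient p x r + s * orient p y r.
Proof. unfold lerp; unfold_points; ring. Qed.
Lemma orient_lerp3 x y s p q : orient p q (lerp x y s) = (1 - s) * orient p q x + s * orient p q y.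
Proof. unfold lerp; unfold_points; ring. Qed.

Lemma orient_lerp_on_line p r s : orient p r (lerp p r s) = 0.
Proof. unfold lerp; unfold_points; ring. Qed.

Lemma orient_lerp_base p r s v : orient p (lerp p r s) v = s * orient p r v.
Proof. unfold lerp; unfold_points; ring. Qed.

Lemma lerp0 x y : lerp x y 0 = x.
Proof. unfold lerp; unfold_points; f_equal; ring. Qed.

Lemma lerp1 x y : lerp x y 1 = y.
Proof. unfold lerp; unfold_points; f_equal; ring. Qed.

Lemma lerp_rev p r s : lerp p r s = lerp r p (1 - s).
Proof. unfold lerp; unfold_points; f_equal; ring. Qed.

Lemma lerp_lerp p r l s : 0 < l -> lerp p (lerp p r l) (s / l) = lerp p r s.
Proof. intro. unfold lerp; unfold_points. f_equal; field; lra. Qed.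

Lemma lerp_of_lerps p r l1 l2 s :
  lerp (lerp p r l1) (lerp p r l2) s = lerp p r (l1 + s * (l2 - l1)).
Proof. unfold lerp; unfold_points. f_equal; ring. Qed.

Lemma dist2_lerp m k s : dist2 (lerp m k s) m = s * s * dist2 k m.
Proof. unfold lerp; unfold_points; ring. Qed.

Lemma lerp_solve g q q' t t' :
  lerp g q t = lerp g q' t' -> 0 < t' -> q' = lerp g q (t / t').
Proof.
  destruct g as [g1 g2], q as [q1 q2], q' as [r1 r2]. unfold lerp; unfold_points.
  intros E Ht. injection E as E1 E2. f_equal.
  - replace r1 with (g1 + (t' * (r1 - g1)) / t') by (field; lra).
    replace (t' * (r1 - g1)) with (t * (q1 - g1)) by lra. field; lra.
  - replace r2 with (g2 + (t' * (r2 - g2)) / t') by (field; lra).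
    replace (t' * (r2 - g2)) with (t * (q2 - g2)) by lra. field; lra.
Qed.

(** * Barycentric sign conditions *)

Definition inside_closed p q r z := 0 <= orient z q r * orient p q r /\
  0 <= orient p z r * orient p q r /\ 0 <= orient p q z * orient p q r.

Definition inside_open p q r z := 0 < orient z q r * orient p q r /\
  0 < orient p z r * orient p q r /\ 0 < orient p q z * orient p q r.

Lemma inside_closed_v1 p q r : inside_closed p q r p.
Proof.
  unfold inside_closed. pose proof (Rle_0_sqr (orient p q r)). unfold Rsqr in *.
  repeat split; [lra| |]; unfold_points; nra.
Qed.
Lemma inside_closed_v2 p q r : inside_closed p q r q.
Proof.
  unfold inside_closed. pose proof (Rle_0_sqr (orient p q r)). unfold Rsqr in *.
  repeat split; [|lra|]; unfold_points; nra.
Qed.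
Lemma inside_closed_v3 p q r : inside_closed p q r r.
Proof.
  unfold inside_closed. pose proof (Rle_0_sqr (orient p q r)). unfold Rsqr in *.
  repeat split; [| |lra]; unfold_points; nra.
Qed.

Lemma inside_open_swap12 p q r z : inside_open p q r z -> inside_open q p r z.
Proof.
  unfold inside_open.
  rewrite (orient_swap12 p q r), (orient_swap12 z q r), (orient_swap12 p z r), (orient_swap12 p q z).
  intros; lra.
Qed.

Lemma inside_open_swap23 p q r z : inside_open p q r z -> inside_open p r q z.
Proof.
  unfold inside_open.
  rewrite (orient_swap23 p q r), (orient_swap23 z q r), (orient_swap23 p z r), (orient_swap23 p q z).
  intros; lra.
Qed.

Lemma inside_open_lerp p q r x y s :
  inside_open p q r x -> inside_closed p q r y -> 0 <= s < 1 -> inside_open p q r (lerp x y s).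
Proof.
  unfold inside_closed, inside_open; rewrite !orient_lerp1, !orient_lerp2, !orient_lerp3.
  intros [? [? ?]] [? [? ?]] ?. repeat split; nra.
Qed.

Lemma inside_open_lerp_r p q r x y s :
  inside_closed p q r x -> inside_open p q r y -> 0 < s <= 1 -> inside_open p q r (lerp x y s).
Proof.
  unfold inside_closed, inside_open; rewrite !orient_lerp1, !orient_lerp2, !orient_lerp3.
  intros [? [? ?]] [? [? ?]] ?. repeat split; nra.
Qed.

Lemma inside_closed_lerp p q r x y s :
  inside_closed p q r x -> inside_closed p q r y -> 0 <= s <= 1 -> inside_closed p q r (lerp x y s).
Proof.
  unfold inside_closed; rewrite !orient_lerp1, !orient_lerp2, !orient_lerp3.
  intros [? [? ?]] [? [? ?]] ?. repeat split; nra.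
Qed.

Lemma centroid_inside_open p q r : orient p q r <> 0 -> inside_open p q r (centroid (p, q, r)).
Proof.
  intro HD. pose proof (sqr_pos _ HD). unfold inside_open, centroid.
  set (g := ((fst p + fst q + fst r) / 3, (snd p + snd q + snd r) / 3)).
  replace (orient g q r) with (orient p q r / 3) by (unfold g; unfold_points; field).
  replace (orient p g r) with (orient p q r / 3) by (unfold g; unfold_points; field).
  replace (orient p q g) with (orient p q r / 3) by (unfold g; unfold_points; field).
  repeat split; lra.
Qed.

Lemma hull3_iff_inside_closed p q r z :
  orient p q r <> 0 -> hull3 p q r z <-> inside_closed p q r z.
Proof.
  intro HD. pose proof (sqr_pos _ HD) as HD2. unfold inside_closed. split.
  - intros [a [b [c [Ha [Hb [Hc [Hs ->]]]]]]].
    replace c with (1 - a - b) by lra.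
    set (z := padd (pscale a p) (padd (pscale b q) (pscale (1 - a - b) r))).
    replace (orient z q r) with (a * orient p q r) by (unfold z; unfold_points; ring).
    replace (orient p z r) with (b * orient p q r) by (unfold z; unfold_points; ring).
    replace (orient p q z) with ((1 - a - b) * orient p q r) by (unfold z; unfold_points; ring).
    repeat split; nra.
  - intros [H1 [H2 H3]]. set (D := orient p q r) in *.
    assert (Hdiv : forall x, 0 <= x * D -> 0 <= x / D).
    { intros x hx. replace (x / D) with ((x * D) / (D * D)) by (field; auto).
      apply Rmult_le_pos; [lra | apply Rlt_le, Rinv_0_lt_compat; lra]. }
    exists (orient z q r / D), (orient p z r / D), (orient p q z / D).
    repeat split; auto.
    + replace (orient z q r / D + orient p z r / D + orient p q z / D)
        with ((orient z q r + orient p z r + orient p q z) / D) by (field; auto).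
      replace (orient z q r + orient p z r + orient p q z) with D by (unfold D; unfold_points; ring).
      field; auto.
    + unfold D in *. unfold_points. f_equal; field; exact HD.
Qed.

Lemma hull3_v1 a b c : hull3 a b c a.
Proof. exists 1, 0, 0. repeat split; try lra. unfold_points. f_equal; ring. Qed.
Lemma hull3_v2 a b c : hull3 a b c b.
Proof. exists 0, 1, 0. repeat split; try lra. unfold_points. f_equal; ring. Qed.
Lemma hull3_v3 a b c : hull3 a b c c.
Proof. exists 0, 0, 1. repeat split; try lra. unfold_points. f_equal; ring. Qed.

Lemma not_extreme_lerp (S : Point -> Prop) p r l :
  S p -> S r -> p <> r -> 0 < l < 1 -> ~ extreme S (lerp p r l).
Proof. intros Hp Hr Hpr Hl [_ H]. apply H. exists p, r. repeat split; auto. exists l. auto. Qed.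

Lemma hull3_collinear_cseg p q r l z : q = lerp p r l -> 0 <= l <= 1 -> hull3 p q r z -> cseg p r z.
Proof.
  intros -> Hl [a [b [c [Ha [Hb [Hc [Hs ->]]]]]]]. exists (b * l + c). split; [split; nra|].
  replace a with (1 - b - c) by lra. unfold lerp; unfold_points. f_equal; ring.
Qed.

Lemma hull3_swap12 p q r z : hull3 p q r z -> hull3 q p r z.
Proof.
  intros [a [b [c [? [? [? [? ->]]]]]]]. exists b, a, c.
  repeat split; try lra. unfold_points. f_equal; ring.
Qed.

Lemma hull3_swap23 p q r z : hull3 p q r z -> hull3 p r q z.
Proof.
  intros [a [b [c [? [? [? [? ->]]]]]]]. exists a, c, b.
  repeat split; try lra. unfold_points. f_equal; ring.
Qed.

Lemma hull3_cycle p q r z : hull3 p q r z -> hull3 q r p z.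
Proof.
  intros [a [b [c [? [? [? [? ->]]]]]]]. exists b, c, a.
  repeat split; try lra. unfold_points. f_equal; ring.
Qed.

(** * Interior of a triangle *)

Lemma abs_lt_of_sqr_lt (a e : R) : 0 < e -> a * a < e * e -> Rabs a < e.
Proof. intros. apply Rabs_def1; nra. Qed.

Lemma orient_continuous (q r z : Point) (eps : R) : 0 < eps -> exists e, 0 < e /\
  forall u, dist2 u z < e * e -> Rabs (orient u q r - orient z q r) < eps.
Proof.
  intro He. destruct q as [q1 q2], r as [r1 r2], z as [z1 z2].
  set (K := Rabs (r2 - q2) + Rabs (r1 - q1) + 1).
  pose proof (Rabs_pos (r2 - q2)); pose proof (Rabs_pos (r1 - q1)).
  assert (HK : 1 <= K) by (unfold K; lra).
  assert (He' : 0 < eps / K) by (apply Rdiv_lt_0_compat; lra).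
  exists (eps / K). split; [exact He'|].
  intros [u1 u2] Hu. unfold dist2 in Hu; simpl in Hu.
  pose proof (Rle_0_sqr (u1 - z1)); pose proof (Rle_0_sqr (u2 - z2)); unfold Rsqr in *.
  assert (B1 : Rabs (u1 - z1) < eps / K) by (apply abs_lt_of_sqr_lt; lra).
  assert (B2 : Rabs (u2 - z2) < eps / K) by (apply abs_lt_of_sqr_lt; lra).
  replace (orient (u1, u2) (q1, q2) (r1, r2) - orient (z1, z2) (q1, q2) (r1, r2))
    with (- (u1 - z1) * (r2 - q2) + (u2 - z2) * (r1 - q1)) by (unfold orient; simpl; ring).
  eapply Rle_lt_trans; [apply Rabs_triang|].
  rewrite !Rabs_mult, Rabs_Ropp.
  pose proof (Rabs_pos (u1 - z1)); pose proof (Rabs_pos (u2 - z2)).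
  assert (eps / K * K = eps) by (field; lra).
  apply Rle_lt_trans with (eps / K * Rabs (r2 - q2) + eps / K * Rabs (r1 - q1)).
  - apply Rplus_le_compat; apply Rmult_le_compat_r; lra.
  - unfold K in *. nra.
Qed.

Lemma orient_sign_stable (q r z : Point) (D : R) : 0 < orient z q r * D ->
  exists e, 0 < e /\ forall u, dist2 u z < e * e -> 0 < orient u q r * D.
Proof.
  intro Hz. assert (Ha : 0 < Rabs (orient z q r)).
  { apply Rabs_pos_lt. intro h. rewrite h in Hz. lra. }
  destruct (orient_continuous q r z _ Ha) as [e [He C]].
  exists e. split; [exact He|]. intros u Hu. specialize (C u Hu).
  destruct (Rle_dec 0 (orient z q r)).
  - rewrite (Rabs_right (orient z q r)) in C by lra. apply Rabs_def2 in C. nra.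
  - rewrite (Rabs_left (orient z q r)) in C by lra. apply Rabs_def2 in C. nra.
Qed.

Lemma sqr_lt_mono (e a d : R) : 0 < e -> e <= a -> d < e * e -> d < a * a.
Proof. intros; nra. Qed.

Lemma interior_of_inside_open p q r z :
  orient p q r <> 0 -> inside_open p q r z -> interior (hull3 p q r) z.
Proof.
  intros HD [H1 [H2 H3]]. set (D := orient p q r) in *.
  rewrite orient_cycle in H2. rewrite orient_cycle, orient_cycle in H3.
  destruct (orient_sign_stable q r z D H1) as [e1 [He1 C1]].
  destruct (orient_sign_stable r p z D H2) as [e2 [He2 C2]].
  destruct (orient_sign_stable p q z D H3) as [e3 [He3 C3]].
  set (e := Rmin e1 (Rmin e2 e3)).
  assert (He : 0 < e) by (repeat apply Rmin_pos; auto).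
  assert (E1 : e <= e1) by apply Rmin_l.
  assert (E2 : e <= e2) by (eapply Rle_trans; [apply Rmin_r|apply Rmin_l]).
  assert (E3 : e <= e3) by (eapply Rle_trans; [apply Rmin_r|apply Rmin_r]).
  exists e. split; [exact He|]. intros u Hu. apply hull3_iff_inside_closed; [exact HD|].
  unfold inside_closed. fold D. rewrite (orient_cycle p u r), (orient_cycle p q u), (orient_cycle q u p).
  repeat split; apply Rlt_le; [apply C1|apply C2|apply C3]; eapply sqr_lt_mono; eauto.
Qed.

(* Push [z] across the line [q r], along the normal, by a distance below the interior radius. *)
Lemma interior_off_edge p q r z :
  orient p q r <> 0 -> interior (hull3 p q r) z -> 0 < orient z q r * orient p q r.
Proof.
  intros HD HI.
  assert (Hz : hull3 p q r z) by (destruct HI as [e [He Hb]]; apply Hb; replace (dist2 z z) with 0 by (unfold dist2; ring); nra).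
  apply hull3_iff_inside_closed in Hz; [|exact HD]. destruct Hz as [H1 _].
  destruct (Rle_lt_or_eq_dec _ _ H1) as [h|h]; [exact h|exfalso].
  assert (Hz0 : orient z q r = 0).
  { symmetry in h. apply Rmult_integral in h. destruct h; [auto|contradiction]. }
  destruct HI as [e [He Hb]]. set (D := orient p q r) in *.
  pose proof (sqr_pos _ HD) as HD2.
  destruct q as [q1 q2], r as [r1 r2], z as [z1 z2].
  set (N := (r2 - q2) * (r2 - q2) + (r1 - q1) * (r1 - q1)).
  assert (HN : 0 < N).
  { unfold N. destruct (Req_dec r1 q1); destruct (Req_dec r2 q2).
    - exfalso. apply HD. unfold D; subst. destruct p; unfold orient; simpl. ring.
    - assert (0 < (r2 - q2) * (r2 - q2)) by (apply sqr_pos; lra). nra.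
    - assert (0 < (r1 - q1) * (r1 - q1)) by (apply sqr_pos; lra). nra.
    - assert (0 < (r1 - q1) * (r1 - q1)) by (apply sqr_pos; lra). nra. }
  set (X := D * D * N). assert (HX : 0 < X) by (unfold X; nra).
  set (ep := e / (X + 1)). assert (Hep : 0 < ep) by (unfold ep; apply Rdiv_lt_0_compat; lra).
  set (u := (z1 + ep * D * (r2 - q2), z2 - ep * D * (r1 - q1))).
  assert (Hu : hull3 p (q1, q2) (r1, r2) u).
  { apply Hb. unfold u, dist2; simpl.
    replace ((z1 + ep * D * (r2 - q2) - z1) * (z1 + ep * D * (r2 - q2) - z1) +
      (z2 - ep * D * (r1 - q1) - z2) * (z2 - ep * D * (r1 - q1) - z2)) with (ep * ep * X)
      by (unfold X, N; ring).
    replace e with (ep * (X + 1)) by (unfold ep; field; lra). nra. }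
  apply hull3_iff_inside_closed in Hu; [|exact HD]. destruct Hu as [Hu _]. fold D in Hu.
  replace (orient u (q1, q2) (r1, r2)) with (orient (z1, z2) (q1, q2) (r1, r2) - ep * D * N)
    in Hu by (unfold u, N, orient; simpl; ring).
  rewrite Hz0 in Hu. replace ((0 - ep * D * N) * D) with (- (ep * N * (D * D))) in Hu by ring.
  assert (0 < ep * N * (D * D)) by (apply Rmult_lt_0_compat; [apply Rmult_lt_0_compat|]; lra). lra.
Qed.

Lemma interior_mono (S S' : Point -> Prop) z :
  (forall u, S u -> S' u) -> interior S z -> interior S' z.
Proof. intros H [e [He Hb]]. exists e; split; auto. Qed.

Lemma interior_hull3_iff p q r z :
  orient p q r <> 0 -> interior (hull3 p q r) z <-> inside_open p q r z.
Proof.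
  intro HD. split; [|apply interior_of_inside_open; exact HD].
  intro HI.
  assert (HI1 : interior (hull3 q r p) z) by (eapply interior_mono; [apply hull3_cycle|exact HI]).
  assert (HI2 : interior (hull3 r p q) z) by (eapply interior_mono; [apply hull3_cycle|exact HI1]).
  pose proof (interior_off_edge q r p z ltac:(rewrite <- orient_cycle; exact HD) HI1) as H2.
  pose proof (interior_off_edge r p q z
    ltac:(rewrite <- (orient_cycle q r p), <- orient_cycle; exact HD) HI2) as H3.
  rewrite <- (orient_cycle p z r), <- (orient_cycle p q r) in H2.
  rewrite <- (orient_cycle q z p), <- (orient_cycle p q z), <- (orient_cycle q r p),
    <- (orient_cycle p q r) in H3.
  split; [apply interior_off_edge; auto|auto].
Qed.

Lemma convex_pos_near0 (a c : R) : 0 < a ->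
  exists s0, 0 < s0 /\ forall s, 0 <= s <= s0 -> 0 < (1 - s) * a + s * c.
Proof.
  intro Ha. pose proof (Rabs_pos c) as Hc. pose proof (Rle_abs (- c)) as Hc'.
  rewrite Rabs_Ropp in Hc'.
  exists (a / (a + Rabs c + 1)). split; [apply Rdiv_lt_0_compat; lra|].
  intros s [H0 H1].
  assert (s * (a + Rabs c + 1) <= a).
  { apply Rmult_le_compat_r with (r := a + Rabs c + 1) in H1; [|lra].
    replace (a / (a + Rabs c + 1) * (a + Rabs c + 1)) with a in H1 by (field; lra). lra. }
  assert (s * c >= - (s * Rabs c)) by nra.
  destruct (Req_dec s 0); [subst; lra|nra].
Qed.

Lemma small_step (K d : R) : 0 <= K -> 0 < d -> exists s, 0 < s <= 1 /\ s * s * K < d * d.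
Proof.
  intros HK Hd. set (d' := Rmin d 1).
  assert (0 < d') by (apply Rmin_pos; lra).
  assert (d' <= d) by apply Rmin_l. assert (d' <= 1) by apply Rmin_r.
  set (s := d' / (K + 1)). assert (Hs : s * (K + 1) = d') by (unfold s; field; lra).
  assert (0 < s) by (unfold s; apply Rdiv_lt_0_compat; lra).
  exists s. split; [split; nra|].
  assert (s * s * K < s * s * (K + 1) * (K + 1)) by nra.
  replace (s * s * (K + 1) * (K + 1)) with (d' * d') in * by (rewrite <- Hs; ring). nra.
Qed.

Lemma open_triangles_overlap p q r p' q' r' z : orient p' q' r' <> 0 ->
  inside_open p q r z -> inside_closed p' q' r' z ->
  exists v, inside_open p q r v /\ inside_open p' q' r' v.
Proof.
  intros HD' [a1 [a2 a3]] Hz'. set (g := centroid (p', q', r')). set (D := orient p q r).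
  destruct (convex_pos_near0 _ (orient g q r * D) a1) as [s1 [P1 S1]].
  destruct (convex_pos_near0 _ (orient p g r * D) a2) as [s2 [P2 S2]].
  destruct (convex_pos_near0 _ (orient p q g * D) a3) as [s3 [P3 S3]].
  set (s := Rmin s1 (Rmin s2 (Rmin s3 1))).
  assert (0 < s) by (repeat apply Rmin_pos; lra).
  assert (s <= s1) by apply Rmin_l.
  assert (s <= s2) by (eapply Rle_trans; [apply Rmin_r|apply Rmin_l]).
  assert (s <= s3) by (eapply Rle_trans; [apply Rmin_r|eapply Rle_trans; [apply Rmin_r|apply Rmin_l]]).
  assert (s <= 1) by (eapply Rle_trans; [apply Rmin_r|eapply Rle_trans; [apply Rmin_r|apply Rmin_r]]).
  exists (lerp z g s). split.
  - unfold inside_open. rewrite orient_lerp1, orient_lerp2, orient_lerp3. fold D.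
    specialize (S1 s ltac:(lra)); specialize (S2 s ltac:(lra)); specialize (S3 s ltac:(lra)).
    unfold D in *. repeat split; lra.
  - apply inside_open_lerp_r; [exact Hz'|apply centroid_inside_open; exact HD'|lra].
Qed.

Lemma inside_open_near_edge p r t mu : orient p r t <> 0 -> 0 < mu < 1 -> exists d, 0 < d /\
  forall v, dist2 v (lerp p r mu) < d * d -> 0 < orient p r v * orient p r t -> inside_open p r t v.
Proof.
  intros HD Hmu. set (D := orient p r t) in *. set (m := lerp p r mu).
  pose proof (sqr_pos _ HD).
  assert (E1 : orient m r t = (1 - mu) * D) by (unfold m, D; rewrite orient_lerp1; unfold_points; ring).
  assert (E2 : orient m t p = mu * D) by (unfold m, D; rewrite orient_lerp1; unfold_points; ring).
  destruct (orient_sign_stable r t m D ltac:(rewrite E1; nra)) as [e1 [He1 C1]].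
  destruct (orient_sign_stable t p m D ltac:(rewrite E2; nra)) as [e2 [He2 C2]].
  exists (Rmin e1 e2). split; [apply Rmin_pos; auto|].
  intros v Hv Hs. pose proof (Rmin_l e1 e2). pose proof (Rmin_r e1 e2).
  unfold inside_open. fold D. repeat split; [apply C1| |exact Hs].
  - apply (sqr_lt_mono (Rmin e1 e2)); auto; apply Rmin_pos; auto.
  - rewrite (orient_cycle p v t). apply C2. apply (sqr_lt_mono (Rmin e1 e2)); auto; apply Rmin_pos; auto.
Qed.

Lemma orient_zero_on_line p r a b c : p <> r ->
  orient p r a = 0 -> orient p r b = 0 -> orient p r c = 0 -> orient a b c = 0.
Proof.
  intros Hpr Ha Hb Hc.
  assert (E1 : orient a b c * (fst r - fst p) =
    orient p r c * (fst b - fst p) - orient p r b * (fst c - fst p)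
    + orient p r b * (fst a - fst p) - orient p r a * (fst b - fst p)
    + orient p r a * (fst c - fst p) - orient p r c * (fst a - fst p)) by (unfold_points; ring).
  assert (E2 : orient a b c * (snd r - snd p) =
    orient p r c * (snd b - snd p) - orient p r b * (snd c - snd p)
    + orient p r b * (snd a - snd p) - orient p r a * (snd b - snd p)
    + orient p r a * (snd c - snd p) - orient p r c * (snd a - snd p)) by (unfold_points; ring).
  rewrite Ha, Hb, Hc in E1, E2.
  destruct (Req_dec (fst r - fst p) 0) as [h1|h1].
  - destruct (Req_dec (snd r - snd p) 0) as [h2|h2].
    + exfalso; apply Hpr. destruct p, r; simpl in *. f_equal; lra.
    + apply Rmult_eq_reg_r with (snd r - snd p); [lra|auto].
  - apply Rmult_eq_reg_r with (fst r - fst p); [lra|auto].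
Qed.

Lemma collinear_lerp (A B C : Point) : orient A B C = 0 -> A <> C ->
  exists l, B = lerp A C l.
Proof.
  intros Ho nAC. destruct A as [a1 a2], B as [b1 b2], C as [c1 c2].
  set (e1 := c1 - a1). set (e2 := c2 - a2). set (N := e1 * e1 + e2 * e2).
  assert (HN : 0 < N).
  { unfold N. destruct (Req_dec e1 0); destruct (Req_dec e2 0).
    - exfalso; apply nAC; unfold e1, e2 in *; f_equal; lra.
    - pose proof (sqr_pos _ H0). nra.
    - pose proof (sqr_pos _ H). nra.
    - pose proof (sqr_pos _ H). nra. }
  set (X := (b1 - a1) * e1 + (b2 - a2) * e2). exists (X / N).
  unfold lerp, padd, pscale, psub; simpl. unfold orient in Ho; simpl in Ho. fold e1 e2 in Ho |- *.
  f_equal.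
  - assert (E : X * e1 = (b1 - a1) * N - e2 * ((b1 - a1) * e2 - (b2 - a2) * e1)) by (unfold X, N; ring).
    rewrite Ho in E. replace (X / N * e1) with (X * e1 / N) by (field; lra). rewrite E. field; lra.
  - assert (E : X * e2 = (b2 - a2) * N + e1 * ((b1 - a1) * e2 - (b2 - a2) * e1)) by (unfold X, N; ring).
    rewrite Ho in E. replace (X / N * e2) with (X * e2 / N) by (field; lra). rewrite E. field; lra.
Qed.

Lemma collinear_between (A B C : Point) : orient A B C = 0 -> A <> B -> B <> C -> A <> C ->
  (exists l, 0 < l < 1 /\ B = lerp A C l) \/ (exists l, 0 < l < 1 /\ A = lerp B C l) \/
  (exists l, 0 < l < 1 /\ C = lerp A B l).
Proof.
  intros Ho nAB nBC nAC. destruct (collinear_lerp A B C Ho nAC) as [l HB].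
  destruct (Rtotal_order l 0) as [h|[h|h]].
  - right; left. exists (- l / (1 - l)). split.
    + split; [apply Rdiv_lt_0_compat; lra|].
      apply Rmult_lt_reg_r with (1 - l); [lra|]. unfold Rdiv. rewrite Rmult_assoc, Rinv_l by lra. lra.
    + rewrite HB. unfold lerp; unfold_points. f_equal; field; lra.
  - exfalso. apply nAB. rewrite HB, h. symmetry; apply lerp0.
  - destruct (Rtotal_order l 1) as [h'|[h'|h']].
    + left. exists l. auto.
    + exfalso. apply nBC. rewrite HB, h'. apply lerp1.
    + right; right. exists (1 / l). split.
      * split; [apply Rdiv_lt_0_compat; lra|].
        apply Rmult_lt_reg_r with l; [lra|]. unfold Rdiv. rewrite Rmult_assoc, Rinv_l by lra. lra.
      * rewrite HB. unfold lerp; unfold_points. f_equal; field; lra.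
Qed.

Lemma inside_open_off_line p r u1 u2 u3 : p <> r -> orient u1 u2 u3 <> 0 ->
  exists k, inside_open u1 u2 u3 k /\ orient p r k <> 0.
Proof.
  intros Hpr HW. set (g := centroid (u1, u2, u3)).
  assert (Hg : inside_open u1 u2 u3 g) by (apply centroid_inside_open; auto).
  destruct (Req_dec (orient p r g) 0) as [hg|hg]; [|exists g; auto].
  assert (exists u, inside_closed u1 u2 u3 u /\ orient p r u <> 0) as [u [Hu Hou]].
  { destruct (Req_dec (orient p r u1) 0) as [a1|a1]; [|exists u1; split; auto; apply inside_closed_v1].
    destruct (Req_dec (orient p r u2) 0) as [a2|a2]; [|exists u2; split; auto; apply inside_closed_v2].
    destruct (Req_dec (orient p r u3) 0) as [a3|a3]; [|exists u3; split; auto; apply inside_closed_v3].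
    exfalso. apply HW. eapply orient_zero_on_line; eauto. }
  exists (lerp g u (1 / 2)). split; [apply inside_open_lerp; auto; lra|].
  rewrite orient_lerp3, hg. intro h. apply Hou. lra.
Qed.

(** * Triangles along a segment *)

Section EdgeNeighbourhood.

Variables (p q r t1 t2 : Point) (lam : R).
Hypothesis Hq : q = lerp p r lam.
Hypothesis Hlam : 0 < lam < 1.
Hypothesis HD1 : orient p r t1 <> 0.
Hypothesis HD2 : orient p q t2 <> 0.

Lemma orient_sub_edge v : orient p q v = lam * orient p r v.
Proof. rewrite Hq. apply orient_lerp_base. Qed.

Lemma near_shared_edge mu : 0 < mu < lam -> exists d, 0 < d /\
  forall v, dist2 v (lerp p r mu) < d * d ->
    (0 < orient p r v * orient p r t1 -> inside_open p r t1 v) /\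
    (0 < orient p r v * orient p r t2 -> inside_open p q t2 v).
Proof.
  intro Hmu.
  destruct (inside_open_near_edge p r t1 mu HD1 ltac:(lra)) as [d1 [Hd1 P1]].
  assert (Hml : 0 < mu / lam < 1).
  { split; [apply Rdiv_lt_0_compat; lra|].
    apply Rmult_lt_reg_r with lam; [lra|]. unfold Rdiv. rewrite Rmult_assoc, Rinv_l by lra. lra. }
  destruct (inside_open_near_edge p q t2 (mu / lam) HD2 Hml) as [d2 [Hd2 P2]].
  rewrite Hq, lerp_lerp, <- Hq in P2 by lra.
  exists (Rmin d1 d2). split; [apply Rmin_pos; auto|].
  intros v Hv. pose proof (Rmin_l d1 d2). pose proof (Rmin_r d1 d2).
  assert (0 < Rmin d1 d2) by (apply Rmin_pos; auto).
  split; intro Hs.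
  - apply P1; [apply (sqr_lt_mono (Rmin d1 d2)); auto|exact Hs].
  - apply P2; [apply (sqr_lt_mono (Rmin d1 d2)); auto|].
    rewrite !orient_sub_edge.
    replace (lam * orient p r v * (lam * orient p r t2))
      with ((lam * lam) * (orient p r v * orient p r t2)) by ring.
    apply Rmult_lt_0_compat; nra.
Qed.

Lemma shared_edge_sides_opposite :
  ~ (exists v, inside_open p r t1 v /\ inside_open p q t2 v) ->
  orient p r t1 * orient p r t2 < 0.
Proof.
  intro Hdis. set (m := lerp p r (lam / 2)).
  destruct (near_shared_edge (lam / 2) ltac:(lra)) as [d [Hd P]]. fold m in P.
  destruct (Rlt_or_le (orient p r t1 * orient p r t2) 0) as [h|h]; [exact h|exfalso].
  assert (Ho2 : orient p r t2 <> 0).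
  { intro h'. apply HD2. rewrite orient_sub_edge, h'. ring. }
  pose proof (sqr_pos _ HD1).
  assert (h2 : 0 < orient p r t1 * orient p r t2).
  { destruct (Rle_lt_or_eq_dec _ _ h) as [h'|h']; [exact h'|].
    symmetry in h'. apply Rmult_integral in h'. destruct h'; contradiction. }
  destruct (small_step (dist2 t1 m) d (dist2_ge0 _ _) Hd) as [s [Hs Hsd]].
  rewrite <- dist2_lerp in Hsd. destruct (P _ Hsd) as [P1 P2].
  assert (Eo : orient p r (lerp m t1 s) = s * orient p r t1).
  { rewrite orient_lerp3. unfold m. rewrite orient_lerp_on_line. ring. }
  apply Hdis. exists (lerp m t1 s). rewrite Eo in P1, P2. split; [apply P1|apply P2]; nra.
Qed.

Lemma triangle_through_shared_edge mu u1 u2 u3 : 0 < mu < lam -> p <> r ->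
  ~ (exists v, inside_open p r t1 v /\ inside_open p q t2 v) ->
  orient u1 u2 u3 <> 0 -> inside_closed u1 u2 u3 (lerp p r mu) ->
  (exists v, inside_open u1 u2 u3 v /\ inside_open p r t1 v) \/
  (exists v, inside_open u1 u2 u3 v /\ inside_open p q t2 v).
Proof.
  intros Hmu Hpr Hdis HW Hm. set (m := lerp p r mu) in *.
  pose proof (shared_edge_sides_opposite Hdis) as Hopp.
  destruct (near_shared_edge mu Hmu) as [d [Hd P]]. fold m in P.
  destruct (inside_open_off_line p r u1 u2 u3 Hpr HW) as [k [Hk Hok]].
  destruct (small_step (dist2 k m) d (dist2_ge0 _ _) Hd) as [s [Hs Hsd]].
  rewrite <- dist2_lerp in Hsd. destruct (P _ Hsd) as [P1 P2].
  assert (Hv : inside_open u1 u2 u3 (lerp m k s)) by (apply inside_open_lerp_r; auto).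
  assert (Eo : orient p r (lerp m k s) = s * orient p r k).
  { rewrite orient_lerp3. unfold m. rewrite orient_lerp_on_line. ring. }
  rewrite Eo in P1, P2. pose proof (sqr_pos _ HD1). pose proof (sqr_pos _ Hok).
  destruct (Rlt_or_le 0 (orient p r k * orient p r t1)) as [h|h].
  - left. exists (lerp m k s). split; [exact Hv|]. apply P1. nra.
  - right. exists (lerp m k s). split; [exact Hv|]. apply P2.
    assert (h' : orient p r k * orient p r t1 < 0).
    { destruct (Rle_lt_or_eq_dec _ _ h) as [h'|h']; [exact h'|].
      apply Rmult_integral in h'. destruct h'; contradiction. }
    assert (0 < orient p r k * orient p r t2 * (orient p r t1 * orient p r t1)) by nra.
    nra.
Qed.

End EdgeNeighbourhood.

Lemma inner_point_avoiding l1 l2 lam : l1 <> l2 -> 0 <= l1 <= 1 -> 0 <= l2 <= 1 ->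
  exists th, 0 < th < 1 /\ l1 + th * (l2 - l1) <> lam /\ 0 < l1 + th * (l2 - l1) < 1.
Proof.
  intros n12 I1 I2. destruct (Req_dec (l1 + 1 / 2 * (l2 - l1)) lam) as [E|E].
  - exists (1 / 4). repeat split; try lra; destruct (Rlt_or_le l1 l2); lra.
  - exists (1 / 2). repeat split; try lra; destruct (Rlt_or_le l1 l2); lra.
Qed.

Lemma Permutation_length_3_inv {A} (a b c : A) l : Permutation [a; b; c] l ->
  l = [a; b; c] \/ l = [a; c; b] \/ l = [b; a; c] \/ l = [b; c; a] \/ l = [c; a; b] \/ l = [c; b; a].
Proof.
  intro H. destruct (Permutation_vs_cons_inv (Permutation_sym H)) as [l1 [l2 ->]].
  apply Permutation_cons_app_inv, Permutation_length_2_inv in H.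
  destruct l1 as [|x [|y [|z l1]]]; simpl in *.
  - destruct H as [H|H]; rewrite H; auto.
  - destruct l2 as [|u l2]; destruct H as [H|H]; inversion H; subst; simpl; auto 10.
  - destruct l2; destruct H as [H|H]; inversion H; subst; simpl; auto 10.
  - destruct H as [H|H]; inversion H.
Qed.

Lemma orient_perm p q r p' q' r' : Permutation [p; q; r] [p'; q'; r'] ->
  orient p' q' r' = orient p q r \/ orient p' q' r' = - orient p q r.
Proof.
  intro H. apply Permutation_length_3_inv in H.
  destruct H as [E|[E|[E|[E|[E|E]]]]]; injection E as -> -> ->;
    [left|right|right|left|left|right]; unfold_points; ring.
Qed.

Lemma inside_open_perm p q r p' q' r' z : Permutation [p; q; r] [p'; q'; r'] ->
  inside_open p q r z -> inside_open p' q' r' z.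
Proof.
  intros H Hz. apply Permutation_length_3_inv in H.
  destruct H as [E|[E|[E|[E|[E|E]]]]]; injection E as -> -> ->.
  - exact Hz.
  - apply inside_open_swap23, Hz.
  - apply inside_open_swap12, Hz.
  - apply inside_open_swap23, inside_open_swap12, Hz.
  - apply inside_open_swap12, inside_open_swap23, Hz.
  - apply inside_open_swap23, inside_open_swap12, inside_open_swap23, Hz.
Qed.

Ltac solve_perm3 := first
  [ apply Permutation_refl | apply perm_swap | apply perm_skip, perm_swap
  | etransitivity; [apply perm_swap | apply perm_skip, perm_swap]
  | etransitivity; [apply perm_skip, perm_swap | apply perm_swap]
  | etransitivity; [apply perm_swap | etransitivity; [apply perm_skip, perm_swap | apply perm_swap]] ].

Lemma orient_similar (a c d0 d1 d2 : Point) :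
  orient (padd (cmul a d0) c) (padd (cmul a d1) c) (padd (cmul a d2) c)
  = (fst a * fst a + snd a * snd a) * orient d0 d1 d2.
Proof. unfold cmul; unfold_points; ring. Qed.

Lemma similar_zero (a c d : Point) : fst a = 0 -> snd a = 0 -> padd (cmul a d) c = c.
Proof. destruct a, c, d; simpl; intros; subst. unfold padd, cmul; simpl. f_equal; ring. Qed.

(** * White triangles of a T-graph *)

Lemma ZP_eq_dec (a b : ZP) : {a = b} + {a <> b}.
Proof. decide equality; apply Z.eq_dec. Qed.

Section TGraph.

Variables (d0 d1 d2 : Point) (psi : ZP -> Point).
Hypothesis Hor : 0 < orient d0 d1 d2.
Hypothesis HT : is_Tgraph d0 d1 d2 psi.
Hypothesis HND : is_nondegenerate psi.

Definition wA (w : ZP) := psi w.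
Definition wB (w : ZP) := psi ((fst w + 1)%Z, snd w).
Definition wC (w : ZP) := psi (fst w, (snd w + 1)%Z).
Definition white_vertices (w : ZP) : list Point := [wA w; wB w; wC w].

Lemma psiW_eq w : psiW psi w = hull3 (wA w) (wB w) (wC w).
Proof. destruct w; reflexivity. Qed.

Lemma white_nondegenerate w : orient (wA w) (wB w) (wC w) <> 0.
Proof.
  intro Hz. destruct (tg_white_similar _ _ _ _ HT w) as [a [c HP]].
  pose proof (nd_white _ HND w) as NW. destruct w as [x y]. simpl in HP, NW.
  change (psi (x, y)) with (wA (x, y)) in HP, NW.
  change (psi ((x + 1)%Z, y)) with (wB (x, y)) in HP, NW.
  change (psi (x, (y + 1)%Z)) with (wC (x, y)) in HP, NW.
  assert (Ha : fst a * fst a + snd a * snd a = 0).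
  { assert (E : (fst a * fst a + snd a * snd a) * orient d0 d1 d2 = 0).
    { destruct (orient_perm _ _ _ _ _ _ HP) as [E|E]; rewrite orient_similar, Hz in E; lra. }
    apply Rmult_integral in E. destruct E; lra. }
  assert (fst a = 0) by nra. assert (snd a = 0) by nra.
  rewrite !similar_zero in HP by auto.
  apply NW. assert (Hin : forall u, In u (white_vertices (x, y)) -> u = c).
  { intros u hu. eapply Permutation_in in hu; [|exact HP]. simpl in hu. intuition. }
  unfold white_vertices in Hin. simpl in Hin.
  rewrite (Hin (wA (x, y))), (Hin (wB (x, y))), (Hin (wC (x, y))); auto.
Qed.

Lemma psiW_iff w z : psiW psi w z <-> inside_closed (wA w) (wB w) (wC w) z.
Proof. rewrite psiW_eq. apply hull3_iff_inside_closed, white_nondegenerate. Qed.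

Lemma white_eq_of_common_point w w' v :
  inside_open (wA w) (wB w) (wC w) v -> inside_open (wA w') (wB w') (wC w') v -> w = w'.
Proof.
  intros H1 H2. destruct (ZP_eq_dec w w') as [E|E]; [exact E|exfalso].
  apply (tg_disjoint _ _ _ _ HT w w' v E);
    rewrite psiW_eq; apply interior_hull3_iff; auto using white_nondegenerate.
Qed.

Lemma white_perm_nondegenerate w a b c : Permutation [a; b; c] (white_vertices w) -> orient a b c <> 0.
Proof.
  intros HP E. apply (white_nondegenerate w).
  destruct (orient_perm _ _ _ _ _ _ HP) as [E'|E']; rewrite E', E; ring.
Qed.

Lemma white_eq_of_perm_point w w' a b c v : Permutation [a; b; c] (white_vertices w') ->
  inside_open (wA w) (wB w) (wC w) v -> inside_open a b c v -> w = w'.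
Proof.
  intros HP H1 H2. apply (white_eq_of_common_point w w' v H1).
  exact (inside_open_perm _ _ _ _ _ _ _ HP H2).
Qed.

Lemma no_vertex_inside_white w v : ~ inside_open (wA w) (wB w) (wC w) (psi v).
Proof.
  intro H.
  destruct (open_triangles_overlap _ _ _ _ _ _ _ (white_nondegenerate v) H
    (inside_closed_v1 (wA v) (wB v) (wC v))) as [u [U1 U2]].
  rewrite (white_eq_of_common_point w v u U1 U2) in H.
  destruct H as [_ [H _]]. unfold wA in H. rewrite orient_degenerate in H. lra.
Qed.

Lemma white_meeting_segment p q r t1 t2 t3 lam wF wL wR :
  q = lerp p r lam -> 0 < lam < 1 -> p <> r ->
  Permutation [p; r; t1] (white_vertices wF) -> Permutation [p; q; t2] (white_vertices wL) ->
  Permutation [q; r; t3] (white_vertices wR) -> wF <> wL -> wF <> wR ->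
  forall w z1 z2, z1 <> z2 -> psiW psi w z1 -> psiW psi w z2 -> cseg p r z1 -> cseg p r z2 ->
  w = wF \/ w = wL \/ w = wR.
Proof.
  intros Hq Hl Hpr PF PL PR nFL nFR w z1 z2 hne H1 H2 [l1 [I1 E1]] [l2 [I2 E2]].
  change (z1 = lerp p r l1) in E1. change (z2 = lerp p r l2) in E2.
  assert (n12 : l1 <> l2) by (intros ->; apply hne; congruence).
  apply psiW_iff in H1. apply psiW_iff in H2.
  destruct (inner_point_avoiding l1 l2 lam n12 I1 I2) as [th [Hth [Hmu Hmu01]]].
  set (mu := l1 + th * (l2 - l1)) in *.
  assert (Hm : inside_closed (wA w) (wB w) (wC w) (lerp p r mu)).
  { replace (lerp p r mu) with (lerp z1 z2 th).
    - apply inside_closed_lerp; auto; lra.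
    - rewrite E1, E2. apply lerp_of_lerps. }
  pose proof (white_perm_nondegenerate _ _ _ _ PF) as NF.
  destruct (Rlt_or_le mu lam) as [hm|hm].
  - assert (Hdis : ~ (exists v, inside_open p r t1 v /\ inside_open p q t2 v)).
    { intros [v [a b]]. apply nFL.
      apply (white_eq_of_perm_point wF wL p q t2 v PL); [|exact b].
      apply (inside_open_perm _ _ _ _ _ _ _ PF a). }
    destruct (triangle_through_shared_edge p q r t1 t2 lam Hq Hl NF
      (white_perm_nondegenerate _ _ _ _ PL) mu (wA w) (wB w) (wC w) ltac:(lra) Hpr Hdis
      (white_nondegenerate w) Hm) as [[v [a b]]|[v [a b]]].
    + left. exact (white_eq_of_perm_point w wF _ _ _ v PF a b).
    + right; left. exact (white_eq_of_perm_point w wL _ _ _ v PL a b).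
  - assert (PF' : Permutation [r; p; t1] (white_vertices wF)) by (etransitivity; [apply perm_swap|exact PF]).
    assert (PR' : Permutation [r; q; t3] (white_vertices wR)) by (etransitivity; [apply perm_swap|exact PR]).
    assert (Hdis : ~ (exists v, inside_open r p t1 v /\ inside_open r q t3 v)).
    { intros [v [a b]]. apply nFR.
      apply (white_eq_of_perm_point wF wR r q t3 v PR'); [|exact b].
      apply (inside_open_perm _ _ _ _ _ _ _ PF' a). }
    rewrite lerp_rev in Hm.
    destruct (triangle_through_shared_edge r q p t1 t3 (1 - lam)
      ltac:(rewrite Hq; apply lerp_rev) ltac:(lra) (white_perm_nondegenerate _ _ _ _ PF')
      (white_perm_nondegenerate _ _ _ _ PR') (1 - mu) (wA w) (wB w) (wC w) ltac:(lra)
      ltac:(auto) Hdis (white_nondegenerate w) Hm) as [[v [a b]]|[v [a b]]].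
    + left. exact (white_eq_of_perm_point w wF _ _ _ v PF' a b).
    + right; right. exact (white_eq_of_perm_point w wR _ _ _ v PR' a b).
Qed.

Definition bA (b : ZP) := psi ((fst b + 1)%Z, snd b).
Definition bB (b : ZP) := psi (fst b, (snd b + 1)%Z).
Definition bC (b : ZP) := psi ((fst b + 1)%Z, (snd b + 1)%Z).

Lemma psiB_eq b : psiB psi b = hull3 (bA b) (bB b) (bC b).
Proof. destruct b; reflexivity. Qed.

Lemma white_vertices_distinct w : wA w <> wB w /\ wB w <> wC w /\ wA w <> wC w.
Proof.
  pose proof (white_nondegenerate w) as HD.
  repeat split; intro E; apply HD; rewrite E;
    [apply orient_degenerate|rewrite orient_cycle; apply orient_degenerate|].
  rewrite orient_swap23, orient_degenerate. ring.
Qed.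

Lemma black_vertices_distinct b : bA b <> bB b /\ bB b <> bC b /\ bA b <> bC b.
Proof.
  destruct b as [x y].
  destruct (white_vertices_distinct (x, y)) as [_ [nAB _]].
  destruct (white_vertices_distinct (x, (y + 1)%Z)) as [nBC _].
  destruct (white_vertices_distinct ((x + 1)%Z, y)) as [_ [_ nAC]].
  exact (conj nAB (conj nBC nAC)).
Qed.

Lemma adjH_iff w b : adjH w b <-> w = b \/ w = (fst b, (snd b + 1)%Z) \/ w = ((fst b + 1)%Z, snd b).
Proof.
  destruct w as [x y], b as [u v]; unfold adjH; simpl.
  split; intros [H|[H|H]]; injection H as -> ->;
    [left|right; left|right; right|left|right; left|right; right]; f_equal; lia.
Qed.

Lemma adjacent_drawn w b : adjH w b -> drawn_edge psi w b.
Proof.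
  intro Hadj. apply adjH_iff in Hadj.
  destruct (black_vertices_distinct b) as [nAB [nBC nAC]].
  unfold drawn_edge. rewrite psiW_eq, psiB_eq. destruct b as [x y].
  unfold wA, wB, wC, bA, bB, bC in *; simpl in *.
  destruct Hadj as [-> |[-> | ->]]; simpl.
  - exists (psi ((x + 1)%Z, y)), (psi (x, (y + 1)%Z)).
    repeat split; auto using hull3_v1, hull3_v2, hull3_v3.
  - exists (psi (x, (y + 1)%Z)), (psi ((x + 1)%Z, (y + 1)%Z)).
    repeat split; auto using hull3_v1, hull3_v2, hull3_v3.
  - exists (psi ((x + 1)%Z, y)), (psi ((x + 1)%Z, (y + 1)%Z)).
    repeat split; auto using hull3_v1, hull3_v2, hull3_v3.
Qed.

Section BlackPositions.

Variable pb : ZP -> Point.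
Hypothesis Hpb : black_pos_ok psi pb.

Lemma black_pos_injective b b' : pb b = pb b' -> b = b'.
Proof.
  intro E. destruct (Hpb b) as [[v Hv] [Hb Hbe]]. destruct (Hpb b') as [_ [Hb' Hbe']].
  destruct (nd_vertex _ HND v) as [b1 [b2 [b3 [n12 [n13 [n23 [Hall [e1 [e2 ne3]]]]]]]]].
  rewrite Hv in Hb, Hbe. rewrite <- E, Hv in Hb', Hbe'.
  apply Hall in Hb. apply Hall in Hb'.
  destruct Hb as [-> | [-> | ->]]; try contradiction.
  destruct Hb' as [-> | [-> | ->]]; try contradiction. reflexivity.
Qed.

Lemma black_pos_unique b v :
  psiB psi b (psi v) -> ~ extreme (psiB psi b) (psi v) -> pb b = psi v.
Proof.
  intros H1 H2. destruct (tg_one_inner _ _ _ _ HT b) as [v0 [_ [_ U]]].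
  destruct (Hpb b) as [[v1 ->] [Hb Hbe]].
  rewrite (U v1 Hb Hbe), (U v H1 H2). reflexivity.
Qed.

Lemma black_segment_structure b :
  (exists l, 0 < l < 1 /\ bB b = lerp (bA b) (bC b) l /\ pb b = bB b) \/
  (exists l, 0 < l < 1 /\ bA b = lerp (bB b) (bC b) l /\ pb b = bA b) \/
  (exists l, 0 < l < 1 /\ bC b = lerp (bA b) (bB b) l /\ pb b = bC b).
Proof.
  destruct (black_vertices_distinct b) as [nAB [nBC nAC]].
  assert (Hcol : orient (bA b) (bB b) (bC b) = 0).
  { pose proof (tg_black_segment _ _ _ _ HT b) as H. destruct b; exact H. }
  destruct (collinear_between _ _ _ Hcol nAB nBC nAC) as [[l [Hl E]]|[[l [Hl E]]|[l [Hl E]]]].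
  - left. exists l. split; [exact Hl|split; [exact E|]].
    apply (black_pos_unique b (fst b, (snd b + 1)%Z)); rewrite psiB_eq; [apply hull3_v2|].
    change (psi (fst b, (snd b + 1)%Z)) with (bB b). rewrite E.
    apply not_extreme_lerp; auto using hull3_v1, hull3_v3.
  - right; left. exists l. split; [exact Hl|split; [exact E|]].
    apply (black_pos_unique b ((fst b + 1)%Z, snd b)); rewrite psiB_eq; [apply hull3_v1|].
    change (psi ((fst b + 1)%Z, snd b)) with (bA b). rewrite E.
    apply not_extreme_lerp; auto using hull3_v2, hull3_v3.
  - right; right. exists l. split; [exact Hl|split; [exact E|]].
    apply (black_pos_unique b ((fst b + 1)%Z, (snd b + 1)%Z)); rewrite psiB_eq; [apply hull3_v3|].
    change (psi ((fst b + 1)%Z, (snd b + 1)%Z)) with (bC b). rewrite E.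
    apply not_extreme_lerp; auto using hull3_v1, hull3_v2.
Qed.

Lemma black_pos_in_adjacent_white w b : adjH w b -> inside_closed (wA w) (wB w) (wC w) (pb b).
Proof.
  intro Hadj. apply adjH_iff in Hadj.
  destruct (black_segment_structure b) as [[l [Hl [E ->]]]|[[l [Hl [E ->]]]|[l [Hl [E ->]]]]];
    destruct b as [x y]; unfold bA, bB, bC in *; simpl in *;
    destruct Hadj as [-> | [-> | ->]]; unfold wA, wB, wC; simpl;
    first [ apply inside_closed_v1 | apply inside_closed_v2 | apply inside_closed_v3
          | rewrite E; apply inside_closed_lerp;
            [ first [apply inside_closed_v1 | apply inside_closed_v2 | apply inside_closed_v3]
            | first [apply inside_closed_v1 | apply inside_closed_v2 | apply inside_closed_v3]
            | lra ] ].
Qed.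

Ltac white_perm := unfold white_vertices, wA, wB, wC, bA, bB, bC; simpl; solve_perm3.
Ltac ZP_neq := let h := fresh in intro h; injection h; lia.

Lemma drawn_adjacent w b : drawn_edge psi w b -> adjH w b.
Proof.
  intros [z1 [z2 [hne [Hw1 [Hb1 [Hw2 Hb2]]]]]]. rewrite psiB_eq in Hb1, Hb2.
  destruct (black_vertices_distinct b) as [nAB [nBC nAC]].
  apply adjH_iff. destruct b as [x y]; simpl.
  destruct (black_segment_structure (x, y)) as [[l [Hl [E _]]]|[[l [Hl [E _]]]|[l [Hl [E _]]]]].
  - destruct (white_meeting_segment _ _ _ (wB ((x + 1)%Z, y)) (wA (x, y)) (wC (x, (y + 1)%Z)) l
      ((x + 1)%Z, y) (x, y) (x, (y + 1)%Z) E Hl nAC ltac:(white_perm) ltac:(white_perm)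
      ltac:(white_perm) ltac:(ZP_neq) ltac:(ZP_neq) w z1 z2 hne Hw1 Hw2
      (hull3_collinear_cseg _ _ _ _ _ E ltac:(lra) Hb1) (hull3_collinear_cseg _ _ _ _ _ E ltac:(lra) Hb2))
      as [-> | [-> | ->]]; auto.
  - apply hull3_swap12 in Hb1, Hb2.
    destruct (white_meeting_segment _ _ _ (wC (x, (y + 1)%Z)) (wA (x, y)) (wB ((x + 1)%Z, y)) l
      (x, (y + 1)%Z) (x, y) ((x + 1)%Z, y) E Hl nBC ltac:(white_perm) ltac:(white_perm)
      ltac:(white_perm) ltac:(ZP_neq) ltac:(ZP_neq) w z1 z2 hne Hw1 Hw2
      (hull3_collinear_cseg _ _ _ _ _ E ltac:(lra) Hb1) (hull3_collinear_cseg _ _ _ _ _ E ltac:(lra) Hb2))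
      as [-> | [-> | ->]]; auto.
  - apply hull3_swap23 in Hb1, Hb2.
    destruct (white_meeting_segment _ _ _ (wA (x, y)) (wB ((x + 1)%Z, y)) (wC (x, (y + 1)%Z)) l
      (x, y) ((x + 1)%Z, y) (x, (y + 1)%Z) E Hl nAB ltac:(white_perm) ltac:(white_perm)
      ltac:(white_perm) ltac:(ZP_neq) ltac:(ZP_neq) w z1 z2 hne Hw1 Hw2
      (hull3_collinear_cseg _ _ _ _ _ E ltac:(lra) Hb1) (hull3_collinear_cseg _ _ _ _ _ E ltac:(lra) Hb2))
      as [-> | [-> | ->]]; auto.
Qed.

Lemma posW_inside_open w : inside_open (wA w) (wB w) (wC w) (posW psi w).
Proof. destruct w. exact (centroid_inside_open _ _ _ (white_nondegenerate _)). Qed.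

Lemma black_pos_not_inside_white w b : ~ inside_open (wA w) (wB w) (wC w) (pb b).
Proof. destruct (Hpb b) as [[v ->] _]. apply no_vertex_inside_white. Qed.

Lemma edge_inside_white w b t : adjH w b -> 0 <= t < 1 ->
  inside_open (wA w) (wB w) (wC w) (lerp (posW psi w) (pb b) t).
Proof.
  intros Hadj Ht. apply inside_open_lerp; [apply posW_inside_open|apply black_pos_in_adjacent_white|]; auto.
Qed.

(* Otherwise one black position lies on the other edge short of its end, hence strictly inside
   the white triangle. *)
Lemma edges_from_centroid_disjoint w b b' t t' : adjH w b -> adjH w b' -> b <> b' ->
  0 <= t < 1 -> 0 <= t' < 1 -> lerp (posW psi w) (pb b) t = lerp (posW psi w) (pb b') t' ->
  t = 0 \/ t' = 0.
Proof.
  intros A1 A2 nbb Ht Ht' E.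
  destruct (Req_dec t 0) as [|h]; [left; assumption|right].
  destruct (Req_dec t' 0) as [|h']; [assumption|exfalso].
  destruct (Rtotal_order t t') as [c|[c|c]].
  - apply (black_pos_not_inside_white w b').
    rewrite (lerp_solve _ _ _ _ _ E ltac:(lra)). apply edge_inside_white; [exact A1|].
    split; [apply Rmult_le_pos; [lra|apply Rlt_le, Rinv_0_lt_compat; lra]|].
    apply Rmult_lt_reg_r with t'; [lra|]. unfold Rdiv. rewrite Rmult_assoc, Rinv_l by lra. lra.
  - subst t'. apply nbb, black_pos_injective.
    rewrite (lerp_solve _ _ _ _ _ E ltac:(lra)). replace (t / t) with 1 by (field; lra).
    symmetry. apply lerp1.
  - apply (black_pos_not_inside_white w b).
    rewrite (lerp_solve _ _ _ _ _ (eq_sym E) ltac:(lra)). apply edge_inside_white; [exact A2|].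
    split; [apply Rmult_le_pos; [lra|apply Rlt_le, Rinv_0_lt_compat; lra]|].
    apply Rmult_lt_reg_r with t; [lra|]. unfold Rdiv. rewrite Rmult_assoc, Rinv_l by lra. lra.
Qed.

Lemma drawn_edges_meet_at_endpoints w b w' b' z : adjH w b -> adjH w' b' -> (w, b) <> (w', b') ->
  cseg (posW psi w) (pb b) z -> cseg (posW psi w') (pb b') z ->
  (w = w' /\ z = posW psi w) \/ (b = b' /\ z = pb b).
Proof.
  intros A1 A2 hne [t [Ht Ez]] [t' [Ht' Ez']].
  change (z = lerp (posW psi w) (pb b) t) in Ez. change (z = lerp (posW psi w') (pb b') t') in Ez'.
  destruct (Rlt_or_le t 1) as [h1|h1]; destruct (Rlt_or_le t' 1) as [h2|h2].
  - pose proof (edge_inside_white w b t A1 ltac:(lra)) as Z1.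
    pose proof (edge_inside_white w' b' t' A2 ltac:(lra)) as Z2. rewrite <- Ez in Z1. rewrite <- Ez' in Z2.
    pose proof (white_eq_of_common_point _ _ _ Z1 Z2) as <-. left. split; [reflexivity|].
    assert (nbb : b <> b') by (intros <-; apply hne; reflexivity).
    destruct (edges_from_centroid_disjoint w b b' t t' A1 A2 nbb ltac:(lra) ltac:(lra)
      ltac:(rewrite <- Ez, <- Ez'; reflexivity)) as [->| ->].
    + rewrite Ez. apply lerp0.
    + rewrite Ez'. apply lerp0.
  - exfalso. replace t' with 1 in Ez' by lra. rewrite lerp1 in Ez'.
    apply (black_pos_not_inside_white w b'). rewrite <- Ez', Ez. apply edge_inside_white; auto; lra.
  - exfalso. replace t with 1 in Ez by lra. rewrite lerp1 in Ez.
    apply (black_pos_not_inside_white w' b). rewrite <- Ez, Ez'. apply edge_inside_white; auto; lra.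
  - replace t with 1 in Ez by lra. replace t' with 1 in Ez' by lra. rewrite lerp1 in Ez, Ez'.
    right. split; [apply black_pos_injective; congruence|exact Ez].
Qed.

Lemma posH_injective v v' : posH psi pb v = posH psi pb v' -> v = v'.
Proof.
  destruct v as [w|b], v' as [w'|b']; simpl; intro E.
  - f_equal. apply (white_eq_of_common_point w w' (posW psi w)); [apply posW_inside_open|].
    rewrite E. apply posW_inside_open.
  - exfalso. apply (black_pos_not_inside_white w b'). rewrite <- E. apply posW_inside_open.
  - exfalso. apply (black_pos_not_inside_white w' b). rewrite E. apply posW_inside_open.
  - f_equal. apply black_pos_injective, E.
Qed.

End BlackPositions.

End TGraph.

Theorem mainTheorem2 (d0 d1 d2 : Point) (psi pb : ZP -> Point) :
  0 < orient d0 d1 d2 ->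
  is_Tgraph d0 d1 d2 psi ->
  is_nondegenerate psi ->
  black_pos_ok psi pb ->
  (forall w b, drawn_edge psi w b <-> adjH w b) /\ proper_embedding psi pb.
Proof.
  intros Hor HT HND Hpb. split; [|split].
  - intros w b. split; [eapply drawn_adjacent|eapply adjacent_drawn]; eassumption.
  - eapply posH_injective; eassumption.
  - eapply drawn_edges_meet_at_endpoints; eassumption.
Qed.
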